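(* The logic $\mathsf{ICK}\oplus((p\wedge(p\mathrel{\Box\!\!\!\rightarrow} q))\to q)$ is sound and complete with respect to the class of conditional frames $(X,\leq,\mathcal{R})$ satisfying: if $x\in a$ then $x\in{\uparrow}(R_a[x])$, for all worlds $x$ and upsets $a$.
   Context: Formulas: $\phi ::= p\mid\bot\mid\phi\wedge\phi\mid\phi\vee\phi\mid\phi\to\phi\mid\phi\mathrel{\Box\!\!\!\rightarrow}\phi$. $\mathsf{ICK}\oplus\Gamma$ is the smallest set containing intuitionistic propositional logic, $\Gamma$, $(p\mathrel{\Box\!\!\!\rightarrow}(q\wedge r))\leftrightarrow((p\mathrel{\Box\!\!\!\rightarrow} q)\wedge(p\mathrel{\Box\!\!\!\rightarrow} r))$ and $(p\mathrel{\Box\!\!\!\rightarrow}\top)\leftrightarrow\top$, closed under uniform substitution, modus ponens and congruence rules for both arguments of $\mathrel{\Box\!\!\!\rightarrow}$. A conditional frame is $(X,\leq,\mathcal{R})$, $(X,\leq)$ a nonempty preorder, $\mathcal{R}=\{R_a\mid a\text{ an upset}\}$ with $(\leq\circ R_a)\subseteq(R_a\circ\leq)$; valuations assign upsets to letters and $x\models\phi\mathrel{\Box\!\!\!\rightarrow}\psi$ iff every $y$ with $xR_{V(\phi)}y$ satisfies $\psi$. ${\uparrow}S$ is the upward closure of $S$. *)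

Inductive form : Type :=
| Var  : nat -> form
| Bot  : form
| And  : form -> form -> form
| Or   : form -> form -> form
| Imp  : form -> form -> form
| Cond : form -> form -> form.

Definition Top : form := Imp Bot Bot.
Definition Iff (a b : form) : form := And (Imp a b) (Imp b a).

Fixpoint subst (s : nat -> form) (f : form) : form :=
  match f with
  | Var n => s n
  | Bot => Bot
  | And a b => And (subst s a) (subst s b)
  | Or a b => Or (subst s a) (subst s b)
  | Imp a b => Imp (subst s a) (subst s b)
  | Cond a b => Cond (subst s a) (subst s b)
  end.

Definition p : form := Var 0.
Definition q : form := Var 1.
Definition r : form := Var 2.

Inductive ipc_axiom : form -> Prop :=
| A_K  : forall a b, ipc_axiom (Imp a (Imp b a))
| A_S  : forall a b c,
    ipc_axiom (Imp (Imp a (Imp b c)) (Imp (Imp a b) (Imp a c)))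
| A_AndE1 : forall a b, ipc_axiom (Imp (And a b) a)
| A_AndE2 : forall a b, ipc_axiom (Imp (And a b) b)
| A_AndI  : forall a b, ipc_axiom (Imp a (Imp b (And a b)))
| A_OrI1  : forall a b, ipc_axiom (Imp a (Or a b))
| A_OrI2  : forall a b, ipc_axiom (Imp b (Or a b))
| A_OrE   : forall a b c,
    ipc_axiom (Imp (Imp a c) (Imp (Imp b c) (Imp (Or a b) c)))
| A_Bot   : forall a, ipc_axiom (Imp Bot a).

Definition ICK_ax_and : form :=
  Iff (Cond p (And q r)) (And (Cond p q) (Cond p r)).
Definition ICK_ax_top : form := Iff (Cond p Top) Top.

Inductive ICK_plus (Gamma : form -> Prop) : form -> Prop :=
| D_ipc   : forall f, ipc_axiom f -> ICK_plus Gamma f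
| D_gamma : forall f, Gamma f -> ICK_plus Gamma f
| D_and   : ICK_plus Gamma ICK_ax_and
| D_top   : ICK_plus Gamma ICK_ax_top
| D_subst : forall s f, ICK_plus Gamma f -> ICK_plus Gamma (subst s f)
| D_mp    : forall a b, ICK_plus Gamma (Imp a b) -> ICK_plus Gamma a ->
              ICK_plus Gamma b
| D_congL : forall a b c, ICK_plus Gamma (Iff a b) ->
              ICK_plus Gamma (Iff (Cond a c) (Cond b c))
| D_congR : forall a b c, ICK_plus Gamma (Iff a b) ->
              ICK_plus Gamma (Iff (Cond c a) (Cond c b)).

Definition MP_axiom : form := Imp (And p (Cond p q)) q.
Definition Gamma_MP (f : form) : Prop := f = MP_axiom.

Definition upset {X : Type} (le : X -> X -> Prop) (a : X -> Prop) : Prop :=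
  forall x y, le x y -> a x -> a y.

Record frame : Type := {
  world :> Type;
  fle : world -> world -> Prop;
  (* R_a, meaningful for upsets a *)
  fR : (world -> Prop) -> world -> world -> Prop;
  f_inhabited : inhabited world;
  fle_refl : forall x, fle x x;
  fle_trans : forall x y z, fle x y -> fle y z -> fle x z;
  f_coh : forall a, upset fle a ->
    forall x y z, fle x y -> fR a y z -> exists w, fR a x w /\ fle w z
}.

Definition valuation (F : frame) : Type := nat -> world F -> Prop.
Definition upset_valuation (F : frame) (V : valuation F) : Prop :=
  forall n, upset (fle F) (V n).

Fixpoint forces (F : frame) (V : valuation F) (x : world F) (f : form) : Prop :=
  match f with
  | Var n => V n x
  | Bot => False
  | And a b => forces F V x a /\ forces F V x b
  | Or a b => forces F V x a \/ forces F V x b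
  | Imp a b => forall y, fle F x y -> forces F V y a -> forces F V y b
  | Cond a b => forall y, fR F (fun z => forces F V z a) x y -> forces F V y b
  end.

Definition valid_in (F : frame) (f : form) : Prop :=
  forall V : valuation F, upset_valuation F V -> forall x : world F, forces F V x f.

Definition refl_cond (F : frame) : Prop :=
  forall (a : world F -> Prop), upset (fle F) a ->
    forall x, a x -> exists y, fR F a x y /\ fle F y x.

From Stdlib Require Import Classical FunctionalExtensionality PropExtensionality Arith Cantor.

(* Soundness is by induction on derivations; the axiom (p ∧ (p □→ q)) → q holds in
   a frame with the condition because q persists upwards from the R_a-successor of x
   lying below x.  Completeness uses the canonical frame of prime theories ordered by
   inclusion, with x R_a y iff ψ ∈ y whenever φ □→ ψ ∈ x for a formula φ whose truth
   set is a; congruence of □→ in its first argument makes this independent of φ, and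
   the axiom gives x R_a x whenever x ∈ a. *)


Section FrameSemantics.

Variable F : frame.

Lemma forces_upset (V : valuation F) : upset_valuation F V ->
  forall f, upset (fle F) (fun x => forces F V x f).
Proof.
  intros hV f; induction f as [n| |a IHa b IHb|a IHa b IHb|a IHa b IHb|a IHa b IHb];
    simpl; intros x y Hxy Hx.
  - exact (hV n x y Hxy Hx).
  - exact Hx.
  - destruct Hx; split; eauto.
  - destruct Hx; [left|right]; eauto.
  - intros z Hyz; apply Hx; eapply fle_trans; eauto.
  - intros z Hyz.
    destruct (f_coh F _ IHa x y z Hxy Hyz) as [w [Hxw Hwz]].
    exact (IHb w z Hwz (Hx w Hxw)).
Qed.

Lemma truth_set_eq (V V' : valuation F) a b :
  (forall x, forces F V x a <-> forces F V' x b) ->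
  (fun x => forces F V x a) = (fun x => forces F V' x b).
Proof.
  intro H; apply functional_extensionality; intro x.
  apply propositional_extensionality, H.
Qed.

Lemma forces_Iff (V : valuation F) x a b :
  forces F V x (Iff a b) -> forces F V x a <-> forces F V x b.
Proof.
  intros [Hab Hba]; split; [apply Hab | apply Hba]; apply fle_refl.
Qed.

Lemma forces_subst (V : valuation F) s f : forall x,
  forces F V x (subst s f) <-> forces F (fun n z => forces F V z (s n)) x f.
Proof.
  induction f as [n| |a IHa b IHb|a IHa b IHb|a IHa b IHb|a IHa b IHb];
    simpl; intro x.
  - reflexivity.
  - reflexivity.
  - rewrite IHa, IHb; reflexivity.
  - rewrite IHa, IHb; reflexivity.
  - split; intros H y Hxy; specialize (H y Hxy); rewrite IHa, IHb in *; exact H.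
  - rewrite (truth_set_eq _ _ _ _ IHa).
    split; intros H y Hxy; specialize (H y Hxy); rewrite IHb in *; exact H.
Qed.

Lemma ipc_axiom_valid f : ipc_axiom f -> valid_in F f.
Proof.
  intros Hf V hV x; pose proof (forces_upset V hV) as Hup.
  destruct Hf; simpl.
  - intros y _ Ha z Hyz _; exact (Hup a y z Hyz Ha).
  - intros y _ Habc z Hyz Hab u Hzu Ha.
    assert (Hyu : fle F y u) by (eapply fle_trans; eauto).
    exact (Habc u Hyu Ha u (fle_refl F u) (Hab u Hzu Ha)).
  - intros y _ [Ha _]; exact Ha.
  - intros y _ [_ Hb]; exact Hb.
  - intros y _ Ha z Hyz Hb; split; [exact (Hup a y z Hyz Ha) | exact Hb].
  - intros y _ Ha; left; exact Ha.
  - intros y _ Hb; right; exact Hb.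
  - intros y _ Hac z Hyz Hbc u Hzu [Ha|Hb].
    + apply (Hac u); [eapply fle_trans; eauto | exact Ha].
    + exact (Hbc u Hzu Hb).
  - intros y _ [].
Qed.

Lemma Cond_and_valid : valid_in F ICK_ax_and.
Proof.
  intros V _ x; simpl; split; intros y _ H.
  - split; intros z Hz; apply H in Hz; tauto.
  - intros z Hz; split; [apply (proj1 H) | apply (proj2 H)]; exact Hz.
Qed.

Lemma Cond_top_valid : valid_in F ICK_ax_top.
Proof. intros V _ x; simpl; split; intros y _ H; intros; auto. Qed.

End FrameSemantics.

Theorem ICK_plus_sound Gamma F : (forall g, Gamma g -> valid_in F g) ->
  forall f, ICK_plus Gamma f -> valid_in F f.
Proof.
  intros HGamma f Hf; induction Hf as
    [f Hf|f Hf| | |s f _ IH|a b _ IHab _ IHa|a b c _ IH|a b c _ IH];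
    intros V hV x.
  - exact (ipc_axiom_valid F f Hf V hV x).
  - exact (HGamma f Hf V hV x).
  - apply Cond_and_valid; exact hV.
  - apply Cond_top_valid; exact hV.
  - apply forces_subst, IH.
    intros n; exact (forces_upset F V hV (s n)).
  - exact (IHab V hV x x (fle_refl F x) (IHa V hV x)).
  - assert (E := truth_set_eq F V V a b (fun y => forces_Iff F V y a b (IH V hV y))).
    simpl; rewrite E; split; intros y _ H; exact H.
  - split; intros y _ H z Hz; apply (forces_Iff F V z a b (IH V hV z)), H, Hz.
Qed.

Lemma MP_axiom_valid F : refl_cond F -> valid_in F MP_axiom.
Proof.
  intros HF V hV x; simpl; intros y _ [Hp Hpq].
  destruct (HF _ (forces_upset F V hV p) y Hp) as [z [Hyz Hzy]].
  exact (forces_upset F V hV q z y Hzy (Hpq z Hyz)).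
Qed.

Fixpoint form_code (f : form) : nat :=
  match f with
  | Var n => to_nat (0, n)
  | Bot => to_nat (1, 0)
  | And a b => to_nat (2, to_nat (form_code a, form_code b))
  | Or a b => to_nat (3, to_nat (form_code a, form_code b))
  | Imp a b => to_nat (4, to_nat (form_code a, form_code b))
  | Cond a b => to_nat (5, to_nat (form_code a, form_code b))
  end.

Lemma to_nat_inj m n m' n' : to_nat (m, n) = to_nat (m', n') -> m = m' /\ n = n'.
Proof.
  intro E; apply (f_equal of_nat) in E; rewrite !cancel_of_to in E.
  injection E; auto.
Qed.

Lemma form_code_inj f g : form_code f = form_code g -> f = g.
Proof.
  revert g; induction f; destruct g; cbn [form_code]; intro E;
    apply to_nat_inj in E; destruct E as [Ek E]; try discriminate;
    try (apply to_nat_inj in E; destruct E); f_equal; auto.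
Qed.

Section Derivability.

Variable Gamma : form -> Prop.

Local Notation Thm := (ICK_plus Gamma).

Lemma thm_ax f : ipc_axiom f -> Thm f.
Proof. apply D_ipc. Qed.

Lemma thm_imp_refl a : Thm (Imp a a).
Proof.
  apply (D_mp _ (Imp a (Imp a a))); [apply (D_mp _ (Imp a (Imp (Imp a a) a)))|].
  all: apply thm_ax; constructor.
Qed.

Lemma thm_imp_trans a b c : Thm (Imp a b) -> Thm (Imp b c) -> Thm (Imp a c).
Proof.
  intros Hab Hbc.
  apply (D_mp _ (Imp a b)); [|exact Hab].
  apply (D_mp _ (Imp a (Imp b c))); [apply thm_ax, A_S|].
  apply (D_mp _ (Imp b c)); [apply thm_ax, A_K | exact Hbc].
Qed.

Lemma thm_iff_intro a b : Thm (Imp a b) -> Thm (Imp b a) -> Thm (Iff a b).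
Proof.
  intros Hab Hba; apply (D_mp _ (Imp b a)); [|exact Hba].
  apply (D_mp _ (Imp a b)); [apply thm_ax, A_AndI | exact Hab].
Qed.

Lemma thm_iff_l a b : Thm (Iff a b) -> Thm (Imp a b).
Proof. apply D_mp, thm_ax, A_AndE1. Qed.

Lemma thm_iff_r a b : Thm (Iff a b) -> Thm (Imp b a).
Proof. apply D_mp, thm_ax, A_AndE2. Qed.

Lemma thm_Cond_and a b c : Thm (Iff (Cond a (And b c)) (And (Cond a b) (Cond a c))).
Proof.
  exact (D_subst _ (fun n => match n with 0 => a | 1 => b | _ => c end) _ (D_and _)).
Qed.

Lemma thm_Cond_mono a b c : Thm (Imp b c) -> Thm (Imp (Cond a b) (Cond a c)).
Proof.
  intro Hbc.
  assert (E : Thm (Iff b (And b c))).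
  { apply thm_iff_intro; [|apply thm_ax, A_AndE1].
    apply (D_mp _ (Imp b c)); [|exact Hbc].
    apply (D_mp _ (Imp b (Imp c (And b c)))); apply thm_ax; constructor. }
  apply (thm_imp_trans _ _ _ (thm_iff_l _ _ (D_congR _ _ _ a E))).
  apply (thm_imp_trans _ _ _ (thm_iff_l _ _ (thm_Cond_and a b c))).
  apply thm_ax, A_AndE2.
Qed.

Lemma thm_Cond_nec a b : Thm b -> Thm (Cond a b).
Proof.
  intro Hb; apply (D_mp _ (Cond a Top)).
  - apply thm_Cond_mono; apply (D_mp _ b); [apply thm_ax, A_K | exact Hb].
  - apply (D_mp _ Top); [|apply thm_imp_refl].
    exact (thm_iff_r _ _ (D_subst _ (fun _ => a) _ (D_top _))).
Qed.

Inductive Der (G : form -> Prop) : form -> Prop :=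
| Der_hyp g : G g -> Der G g
| Der_thm g : Thm g -> Der G g
| Der_mp a b : Der G (Imp a b) -> Der G a -> Der G b.

Lemma Der_weaken (G H : form -> Prop) g :
  (forall h, G h -> H h) -> Der G g -> Der H g.
Proof.
  intros GH; induction 1; [apply Der_hyp | apply Der_thm | eapply Der_mp]; eauto.
Qed.

Lemma Der_empty g : Der (fun _ => False) g -> Thm g.
Proof. induction 1; [contradiction | assumption | eapply D_mp; eauto]. Qed.

Definition extend (G : form -> Prop) (a : form) : form -> Prop :=
  fun g => G g \/ g = a.

Lemma Der_deduction G a b : Der (extend G a) b -> Der G (Imp a b).
Proof.
  induction 1 as [g [Hg|Eg]|g Hg|b c _ IHbc _ IHb]; try subst g.
  - apply (Der_mp _ g); [apply Der_thm, thm_ax, A_K | apply Der_hyp, Hg].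
  - apply Der_thm, thm_imp_refl.
  - apply (Der_mp _ g); [apply Der_thm, thm_ax, A_K | apply Der_thm, Hg].
  - apply (Der_mp _ (Imp a b)); [|exact IHb].
    apply (Der_mp _ (Imp a (Imp b c))); [apply Der_thm, thm_ax, A_S | exact IHbc].
Qed.

Record ptheory : Type := {
  pt_set :> form -> Prop;
  pt_closed : forall g, Der pt_set g -> pt_set g;
  pt_prime : forall a b, pt_set (Or a b) -> pt_set a \/ pt_set b;
  pt_consistent : ~ pt_set Bot
}.

Section Lindenbaum.

Variables (G : form -> Prop) (psi : form).

Fixpoint lindenbaum_chain (n : nat) : form -> Prop :=
  match n with
  | 0 => G
  | S m => fun g => lindenbaum_chain m g \/
      (form_code g = m /\ ~ Der (extend (lindenbaum_chain m) g) psi)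
  end.

Definition lindenbaum_union (g : form) : Prop := exists n, lindenbaum_chain n g.

Lemma lindenbaum_chain_mono m n g : m <= n -> lindenbaum_chain m g -> lindenbaum_chain n g.
Proof. induction 1; simpl; auto. Qed.

Lemma lindenbaum_chain_omits : ~ Der G psi -> forall n, ~ Der (lindenbaum_chain n) psi.
Proof.
  intros HG n; induction n as [|n IH]; simpl; [exact HG|]; intro Hpsi.
  destruct (classic (exists g, form_code g = n /\
                      ~ Der (extend (lindenbaum_chain n) g) psi)) as [[g [Hg Hng]]|Hnone].
  - apply Hng; revert Hpsi; apply Der_weaken.
    intros h [Hh|[Hh _]]; [left; exact Hh|].
    right; apply form_code_inj; congruence.
  - apply IH; revert Hpsi; apply Der_weaken.
    intros h [Hh|Hh]; [exact Hh | exfalso; apply Hnone; exists h; exact Hh].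
Qed.

Lemma Der_lindenbaum_union g : Der lindenbaum_union g -> exists n, Der (lindenbaum_chain n) g.
Proof.
  induction 1 as [g [n Hg]|g Hg|a b _ [m Hab] _ [n Ha]].
  - exists n; apply Der_hyp, Hg.
  - exists 0; apply Der_thm, Hg.
  - exists (max m n); apply (Der_mp _ a).
    + revert Hab; apply Der_weaken; intro h.
      apply lindenbaum_chain_mono, Nat.le_max_l.
    + revert Ha; apply Der_weaken; intro h.
      apply lindenbaum_chain_mono, Nat.le_max_r.
Qed.

Lemma lindenbaum_union_maximal c :
  ~ Der (extend lindenbaum_union c) psi -> lindenbaum_union c.
Proof.
  intro Hc; exists (S (form_code c)); right; split; [reflexivity|].
  intro H; apply Hc; revert H; apply Der_weaken.
  intros h [Hh|Hh]; [left; exists (form_code c); exact Hh | right; exact Hh].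
Qed.

End Lindenbaum.

Lemma lindenbaum G psi : ~ Der G psi ->
  exists x : ptheory, (forall g, G g -> x g) /\ ~ x psi.
Proof.
  intro HG; set (U := lindenbaum_union G psi).
  assert (HU : ~ Der U psi).
  { intro H; destruct (Der_lindenbaum_union G psi psi H) as [n Hn].
    exact (lindenbaum_chain_omits G psi HG n Hn). }
  assert (Hext : forall c, U c \/ Der U (Imp c psi)).
  { intro c; destruct (classic (Der (extend U c) psi)) as [H|H].
    - right; apply Der_deduction, H.
    - left; apply lindenbaum_union_maximal, H. }
  assert (Hclosed : forall g, Der U g -> U g).
  { intros g Hg; destruct (Hext g) as [H|H]; [exact H|].
    exfalso; apply HU, (Der_mp _ g); assumption. }
  assert (Hprime : forall a b, U (Or a b) -> U a \/ U b).
  { intros a b Hab; destruct (Hext a) as [Ha|Ha]; [left; exact Ha|].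
    destruct (Hext b) as [Hb|Hb]; [right; exact Hb|].
    exfalso; apply HU, (Der_mp _ (Or a b)); [|apply Der_hyp, Hab].
    apply (Der_mp _ (Imp b psi)); [|exact Hb].
    apply (Der_mp _ (Imp a psi)); [apply Der_thm, thm_ax, A_OrE | exact Ha]. }
  assert (Hcons : ~ U Bot).
  { intro HBot; apply HU, (Der_mp _ Bot); [apply Der_thm, thm_ax, A_Bot | apply Der_hyp, HBot]. }
  exists (Build_ptheory U Hclosed Hprime Hcons); split.
  - intros g Hg; exists 0; exact Hg.
  - intro H; apply HU, Der_hyp, H.
Qed.

Section PrimeTheories.

Variable x : ptheory.

Lemma pt_thm g : Thm g -> x g.
Proof. intro Hg; apply pt_closed, Der_thm, Hg. Qed.

Lemma pt_mp a b : x (Imp a b) -> x a -> x b.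
Proof. intros Hab Ha; apply pt_closed, (Der_mp _ a); apply Der_hyp; assumption. Qed.

Lemma pt_And a b : x (And a b) <-> x a /\ x b.
Proof.
  split.
  - intro H; split; (eapply pt_mp; [apply pt_thm, thm_ax | exact H]); constructor.
  - intros [Ha Hb]; apply (pt_mp b); [|exact Hb].
    apply (pt_mp a); [apply pt_thm, thm_ax, A_AndI | exact Ha].
Qed.

Lemma pt_Or a b : x (Or a b) <-> x a \/ x b.
Proof.
  split; [apply pt_prime|].
  intros [H|H]; (eapply pt_mp; [apply pt_thm, thm_ax | exact H]); constructor.
Qed.

Lemma pt_Cond_Der a b : Der (fun g => x (Cond a g)) b -> x (Cond a b).
Proof.
  induction 1 as [g Hg|g Hg|b c _ IHbc _ IHb].
  - exact Hg.
  - apply pt_thm, thm_Cond_nec, Hg.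
  - (* [a □→ (b → c)] and [a □→ b] give [a □→ ((b → c) ∧ b)], whence [a □→ c]. *)
    apply (pt_mp (Cond a (And (Imp b c) b))).
    + apply pt_thm, thm_Cond_mono.
      apply (D_mp _ (Imp (And (Imp b c) b) b)); [|apply thm_ax, A_AndE2].
      apply (D_mp _ (Imp (And (Imp b c) b) (Imp b c))); apply thm_ax; constructor.
    + apply (pt_mp _ _ (pt_thm _ (thm_iff_r _ _ (thm_Cond_and a _ _)))).
      apply pt_And; split; assumption.
Qed.

Lemma pt_Imp_witness a b : ~ x (Imp a b) ->
  exists y : ptheory, (forall g, x g -> y g) /\ y a /\ ~ y b.
Proof.
  intro Hab.
  assert (HD : ~ Der (extend x a) b) by (intro H; apply Hab, pt_closed, Der_deduction, H).
  destruct (lindenbaum _ _ HD) as [y [Hy Hb]].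
  exists y; split; [|split]; [intros g Hg; apply Hy; left | apply Hy; right |]; auto.
Qed.

Lemma pt_Cond_witness a b : ~ x (Cond a b) ->
  exists y : ptheory, (forall c, x (Cond a c) -> y c) /\ ~ y b.
Proof.
  intro Hab.
  assert (HD : ~ Der (fun g => x (Cond a g)) b) by (intro H; apply Hab, pt_Cond_Der, H).
  exact (lindenbaum _ _ HD).
Qed.

End PrimeTheories.

Lemma thm_of_ptheories a b : (forall x : ptheory, x a -> x b) -> Thm (Imp a b).
Proof.
  intro H; apply NNPP; intro Hab.
  assert (HD : ~ Der (extend (fun _ => False) a) b)
    by (intro HD; apply Hab, Der_empty, Der_deduction, HD).
  destruct (lindenbaum _ _ HD) as [x [Hx Hb]].
  apply Hb, H, Hx; right; reflexivity.
Qed.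

Lemma pt_Cond_congr (x : ptheory) a a' b :
  (forall y : ptheory, y a <-> y a') -> x (Cond a b) -> x (Cond a' b).
Proof.
  intro Haa'.
  assert (E : Thm (Iff a a'))
    by (apply thm_iff_intro; apply thm_of_ptheories; intro y; apply Haa').
  apply pt_mp, pt_thm, thm_iff_l, D_congL, E.
Qed.

(* [R_a] only constrains successors through formulas defining [a]; for undefinable [a] it is total. *)
Definition canonical_le (x y : ptheory) : Prop := forall g, x g -> y g.

Definition canonical_R (a : ptheory -> Prop) (x y : ptheory) : Prop :=
  forall phi psi, (forall z, a z <-> z phi) -> x (Cond phi psi) -> y psi.

Lemma canonical_le_refl x : canonical_le x x.
Proof. intros g H; exact H. Qed.

Lemma canonical_le_trans x y z : canonical_le x y -> canonical_le y z -> canonical_le x z.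
Proof. intros Hxy Hyz g H; auto. Qed.

Lemma canonical_coh a : upset canonical_le a ->
  forall x y z, canonical_le x y -> canonical_R a y z ->
  exists w, canonical_R a x w /\ canonical_le w z.
Proof.
  intros _ x y z Hxy Hyz; exists z; split; [|apply canonical_le_refl].
  intros phi psi Ha Hx; apply (Hyz phi psi Ha), Hxy, Hx.
Qed.

Definition canonical_frame (w : ptheory) : frame :=
  {| world := ptheory; fle := canonical_le; fR := canonical_R;
     f_inhabited := inhabits w; fle_refl := canonical_le_refl;
     fle_trans := canonical_le_trans; f_coh := canonical_coh |}.

Definition canonical_valuation (w : ptheory) : valuation (canonical_frame w) :=
  fun n x => x (Var n).

Lemma canonical_valuation_upset w : upset_valuation _ (canonical_valuation w).
Proof. intros n x y Hxy Hx; apply Hxy, Hx. Qed.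

Lemma canonical_truth w f : forall x : ptheory,
  forces (canonical_frame w) (canonical_valuation w) x f <-> x f.
Proof.
  induction f as [n| |a IHa b IHb|a IHa b IHb|a IHa b IHb|a IHa b IHb];
    simpl; intro x.
  - reflexivity.
  - split; [contradiction | apply pt_consistent].
  - rewrite IHa, IHb, pt_And; reflexivity.
  - rewrite IHa, IHb, pt_Or; reflexivity.
  - split.
    + intro H; apply NNPP; intro Hab.
      destruct (pt_Imp_witness x a b Hab) as [y [Hxy [Ha Hb]]].
      apply Hb, IHb, H; [exact Hxy | apply IHa, Ha].
    + intros H y Hxy Ha; apply IHb, (pt_mp y a); [apply Hxy, H | apply IHa, Ha].
  - split.
    + intro H; apply NNPP; intro Hab.
      destruct (pt_Cond_witness x a b Hab) as [y [Hy Hb]].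
      apply Hb, IHb, H.
      intros phi psi Hphi Hx; apply Hy.
      apply (pt_Cond_congr x phi); [|exact Hx].
      intro z; rewrite <- Hphi, IHa; reflexivity.
    + intros H y Hxy; apply IHb, (Hxy a b); [intro z; apply IHa | exact H].
Qed.

Lemma canonical_valid_thm w f : valid_in (canonical_frame w) f -> Thm f.
Proof.
  intro Hf; apply NNPP; intro Hnf.
  assert (HD : ~ Der (fun _ => False) f) by (intro HD; apply Hnf, Der_empty, HD).
  destruct (lindenbaum _ _ HD) as [x [_ Hx]].
  apply Hx, (canonical_truth w f x), Hf, canonical_valuation_upset.
Qed.

Lemma canonical_refl_cond w : Thm MP_axiom -> refl_cond (canonical_frame w).
Proof.
  intros HMP a _ x Hx; exists x; split; [|apply canonical_le_refl].
  intros phi psi Ha Hpsi; apply Ha in Hx.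
  apply (pt_mp x (And phi (Cond phi psi))); [|apply pt_And; split; assumption].
  apply pt_thm.
  exact (D_subst _ (fun n => match n with 0 => phi | _ => psi end) _ HMP).
Qed.

End Derivability.

Theorem proposition5p8 :
  forall f : form,
    ICK_plus Gamma_MP f <-> (forall F : frame, refl_cond F -> valid_in F f).
Proof.
  intro f; split.
  - intros Hf F HF; apply (ICK_plus_sound Gamma_MP); [|exact Hf].
    intros g ->; apply MP_axiom_valid, HF.
  - intro Hvalid; apply NNPP; intro Hnf.
    assert (HD : ~ Der Gamma_MP (fun _ => False) f)
      by (intro HD; apply Hnf, Der_empty, HD).
    destruct (lindenbaum Gamma_MP _ _ HD) as [w _].
    apply Hnf, (canonical_valid_thm _ w), Hvalid, canonical_refl_cond.
    apply D_gamma; reflexivity.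
Qed.
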